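(* Let $d\ge 3$, let $\mathcal{H}_A=\mathcal{H}_B=\mathbb{C}^d$ with fixed orthonormal bases $|1\rangle,\dots,|d\rangle$, and $\mathcal{H}=\mathcal{H}_A\otimes\mathcal{H}_B$. The following are equivalent: (i) none of the Werner states $\rho_W(t)=1-tF$ with $t\in(1/d,1/2]$ is $2$-distillable; (ii) the function $$\Phi(x_1,\dots,x_d,y_1,\dots,y_d,u_1,\dots,u_d,v_1,\dots,v_d)=\langle\psi|\,\sigma_W^{\otimes 2}\,|\psi\rangle,\qquad |\psi\rangle=\sum_{i,j=1}^d|i,j,x_i,u_j\rangle+\sum_{i,j=1}^d|i,j,y_i,v_j\rangle,$$ is nonnegative for all vectors $x_i,y_i\in\mathcal{H}_A$ and $u_i,v_i\in\mathcal{H}_B$ ($i=1,\dots,d$), where $\sigma_W=1-\tfrac{d}{2}P$.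
   Context: The flip operator is $F=\sum_{i,j}|i,j\rangle\langle j,i|$ on $\mathcal{H}$, and $P=\frac1d\sum_{i,j}|i,i\rangle\langle j,j|$ is the projector onto the maximally entangled state; $dP$ is the partial transpose $1\otimes T(F)$, so the partial transpose of $\rho_W(t)$ is $1-tdP$. In $|i,j,x_i,u_j\rangle$ the four tensor factors are, in order, Alice's first copy $\mathcal{H}_A$, Bob's first copy $\mathcal{H}_B$, Alice's second copy $\mathcal{H}_A$, Bob's second copy $\mathcal{H}_B$; thus $\sigma_W^{\otimes 2}$ acts on $\mathcal{H}\otimes\mathcal{H}$ with the first $\sigma_W$ on the first two factors and the second on the last two. A bipartite state $\rho$ on $\mathcal{H}$ is called $k$-distillable if there exists a (non-normalized) vector $|\psi\rangle\in\mathcal{H}^{\otimes k}$, regarded as a bipartite vector in $\mathcal{H}_A^{\otimes k}\otimes\mathcal{H}_B^{\otimes k}$, of Schmidt rank at most two such that $\langle\psi|\sigma^{\otimes k}|\psi\rangle<0$, where $\sigma=1\otimes T(\rho)$ is the partial transpose of $\rho$. *)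

From HB Require Import structures.
From mathcomp Require Import all_boot all_order all_algebra.
From mathcomp Require Import complex.
From mathcomp Require Import reals.

Set Implicit Arguments.
Unset Strict Implicit.
Unset Printing Implicit Defensive.

Import Order.TTheory GRing.Theory Num.Theory.
Local Open Scope ring_scope.

Section Defs.
Variable C : numClosedFieldType.
Variable d : nat.

(* Basis index of H = H_A (x) H_B : the pair (i, j) stands for |i,j> = |i>_A |j>_B. *)
Definition idx := ('I_d * 'I_d)%type.

(* A (linear) operator on a space with orthonormal basis indexed by a finType T,
   given by its matrix entries  M x y = <x| M |y>. *)
Definition op (T : finType) := T -> T -> C.

Definition id_op (T : finType) : op T := fun x y => (x == y)%:R.

(* flip operator F = sum_{i,j} |i,j><j,i| :  <i,j|F|k,l> = [k = j][l = i] *)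
Definition flip : op idx := fun x y => ((y.1 == x.2) && (y.2 == x.1))%:R.

(* P = 1/d sum_{i,j} |i,i><j,j| : <i,j|P|k,l> = 1/d [i = j][k = l] *)
Definition maxent_proj : op idx :=
  fun x y => (d%:R)^-1 * ((x.1 == x.2) && (y.1 == y.2))%:R.

(* (non-normalized) Werner state rho_W(t) = 1 - t F *)
Definition werner (t : C) : op idx := fun x y => id_op x y - t * flip x y.

(* partial transpose 1 (x) T on Bob's factor: <i,j|sigma|k,l> = <i,l|rho|k,j> *)
Definition ptrans (rho : op idx) : op idx :=
  fun x y => rho (x.1, y.2) (y.1, x.2).

Definition sigmaW : op idx :=
  fun x y => id_op x y - (d%:R / 2%:R) * maxent_proj x y.

(* H^{(x)k}: a basis vector is a family (i_m, j_m)_{m<k}, i.e.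
   |i_1,j_1,i_2,j_2,...,i_k,j_k>, factors ordered A1,B1,A2,B2,... *)
Definition kidx (k : nat) := {ffun 'I_k -> idx}.

Definition tpow (k : nat) (s : op idx) : op (kidx k) :=
  fun x y => \prod_(m < k) s (x m) (y m).

Definition qform (T : finType) (M : op T) (psi : T -> C) : C :=
  \sum_(x : T) \sum_(y : T) (psi x)^* * M x y * psi y.

Definition kA (k : nat) := {ffun 'I_k -> 'I_d}.

Definition join_idx (k : nat) (a b : kA k) : kidx k := [ffun m => (a m, b m)].

(* coefficient matrix of psi in H_A^{(x)k} (x) H_B^{(x)k} w.r.t. product bases *)
Definition coef_mx (k : nat) (psi : kidx k -> C) : 'M[C]_(#|kA k|, #|kA k|) :=
  \matrix_(i, j) psi (join_idx (enum_val i) (enum_val j)).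

Definition schmidt_rank (k : nat) (psi : kidx k -> C) : nat := \rank (coef_mx psi).

Definition distillable (k : nat) (rho : op idx) : Prop :=
  exists psi : kidx k -> C,
    (schmidt_rank psi <= 2)%N /\ qform (@tpow k (ptrans rho)) psi < 0.

(* the vector psi = sum_{i,j} |i,j,x_i,u_j> + sum_{i,j} |i,j,y_i,v_j>  in H^{(x)2};
   x_i, y_i in H_A = C^d and u_j, v_j in H_B = C^d are given by coordinates. *)
Definition psi2 (x y u v : 'I_d -> 'I_d -> C) : kidx 2 -> C :=
  fun z => let: (i, j) := z ord0 in let: (a, b) := z (@Ordinal 2 1 isT) in
           x i a * u j b + y i a * v j b.

Definition Phi (x y u v : 'I_d -> 'I_d -> C) : C :=
  qform (@tpow 2 sigmaW) (psi2 x y u v).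

End Defs.

Arguments tpow {C d} k s _ _.
Arguments distillable {C d} k rho.
Arguments werner {C} d t _ _.
Arguments Phi {C d} x y u v.

(* The partial transpose of rho_W(t) is 1 - t d P = a sigma_W + (1 - a) 1 with a = 2t, so
   for t in [0, 1/2] its tensor square is a convex combination of sigma_W (x) sigma_W,
   sigma_W (x) 1, 1 (x) sigma_W and 1 (x) 1.  Every vector of Schmidt rank at most two has
   the form psi of (ii), so the first term is a value of Phi.  The mixed terms reduce to
   <phi|sigma_W|phi> for Schmidt-rank-two vectors phi of a single copy, and such a value is
   again a value of Phi: put the second copy of psi on |k,l> with k <> l, where
   <k,l|sigma_W|k,l> = 1.  Conversely, for t = 1/2 the partial transpose is exactly
   sigma_W, so (i) forbids Phi < 0, and Phi is real since sigma_W is real symmetric. *)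
From HB Require Import structures.
From mathcomp Require Import all_boot all_order all_algebra.
From mathcomp Require Import complex.
From mathcomp Require Import reals.
From mathcomp Require Import ring.

Set Implicit Arguments.
Unset Strict Implicit.
Unset Printing Implicit Defensive.
Import Order.TTheory GRing.Theory Num.Theory.
Local Open Scope ring_scope.

Local Notation o1 := (@Ordinal 2 1 isT).

Section QuadraticForm.
Variables (C : numClosedFieldType) (T : finType).
Implicit Types (M N : op C T) (f g : T -> C).

Lemma eq_qform M N f g : M =2 N -> f =1 g -> qform M f = qform N g.
Proof.
by move=> eMN efg; apply: eq_bigr => x _; apply: eq_bigr => y _; rewrite eMN !efg.
Qed.

Lemma qformD M N f :
  qform (fun x y => M x y + N x y) f = qform M f + qform N f.
Proof.
rewrite /qform -big_split; apply: eq_bigr => x _.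
by rewrite -big_split; apply: eq_bigr => y _ /=; ring.
Qed.

Lemma qformZ (a : C) M f : qform (fun x y => a * M x y) f = a * qform M f.
Proof.
rewrite /qform mulr_sumr; apply: eq_bigr => x _.
by rewrite mulr_sumr; apply: eq_bigr => y _; ring.
Qed.

Lemma sum_delta_mul (F : T -> C) e : \sum_p (e == p)%:R * F p = F e.
Proof.
rewrite (bigD1 e) //= eqxx mul1r big1 ?addr0 // => p ne_pe.
by rewrite eq_sym (negbTE ne_pe) mul0r.
Qed.

Lemma qform_id_ge0 f : 0 <= qform (@id_op C T) f.
Proof.
apply: sumr_ge0 => p _.
rewrite (eq_bigr (fun q => (p == q)%:R * ((f p)^* * f q))) => [|q _].
  by rewrite sum_delta_mul mulrC mul_conjC_ge0.
by rewrite /id_op; ring.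
Qed.

Lemma qform_delta M e : qform M (fun p => (e == p)%:R) = M e e.
Proof.
transitivity (\sum_p (e == p)%:R * (\sum_q (e == q)%:R * M p q)).
  apply: eq_bigr => p _; rewrite mulr_sumr; apply: eq_bigr => q _.
  by rewrite conjC_nat; ring.
by rewrite sum_delta_mul (sum_delta_mul (M e)).
Qed.

End QuadraticForm.

Section TensorSquare.
Variables (C : numClosedFieldType) (T : finType).
Implicit Types (A B : op C T) (p q w : T).

Definition pair2 p q : {ffun 'I_2 -> T} := [ffun m => if m == ord0 then p else q].

Lemma pair2_0 p q : pair2 p q ord0 = p. Proof. by rewrite ffunE. Qed.
Lemma pair2_1 p q : pair2 p q o1 = q. Proof. by rewrite ffunE. Qed.

Lemma pair2_eta (z : {ffun 'I_2 -> T}) : pair2 (z ord0) (z o1) = z.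
Proof.
apply/ffunP => -[[|[|m]] lt_m2]; rewrite ffunE //=; congr (z _); exact: val_inj.
Qed.

Lemma big_pair2 (F : {ffun 'I_2 -> T} -> C) :
  \sum_z F z = \sum_p \sum_q F (pair2 p q).
Proof.
rewrite pair_big (reindex (fun pq : T * T => pair2 pq.1 pq.2)) //=.
exists (fun z => (z ord0, z o1)) => [[p q] _ | z _] /=.
  by rewrite pair2_0 pair2_1.
by rewrite pair2_eta.
Qed.

Definition tensor2 A B : op C {ffun 'I_2 -> T} :=
  fun x y => A (x ord0) (y ord0) * B (x o1) (y o1).

Lemma tensor2_pair2 A B p0 p1 q0 q1 :
  tensor2 A B (pair2 p0 p1) (pair2 q0 q1) = A p0 q0 * B p1 q1.
Proof. by rewrite /tensor2 !pair2_0 !pair2_1. Qed.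

Lemma qform_pair2 (M : op C {ffun 'I_2 -> T}) psi :
  qform M psi = \sum_p0 \sum_p1 \sum_q0 \sum_q1
    (psi (pair2 p0 p1))^* * M (pair2 p0 p1) (pair2 q0 q1) * psi (pair2 q0 q1).
Proof.
rewrite /qform big_pair2; apply: eq_bigr => p0 _; apply: eq_bigr => p1 _.
by rewrite big_pair2.
Qed.

Lemma qform_tensor2_id A psi :
  qform (tensor2 A (@id_op C T)) psi = \sum_w qform A (fun p => psi (pair2 p w)).
Proof.
rewrite qform_pair2 exchange_big; apply: eq_bigr => w _; apply: eq_bigr => p0 _.
apply: eq_bigr => q0 _.
rewrite -(sum_delta_mul (fun q1 => (psi (pair2 p0 w))^* * A p0 q0 * psi (pair2 q0 q1))).
by apply: eq_bigr => q1 _; rewrite tensor2_pair2 /id_op; ring.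
Qed.

Lemma qform_id_tensor2 B psi :
  qform (tensor2 (@id_op C T) B) psi = \sum_w qform B (fun q => psi (pair2 w q)).
Proof.
rewrite qform_pair2; apply: eq_bigr => w _; apply: eq_bigr => p1 _.
rewrite -(sum_delta_mul
  (fun q0 => \sum_q1 (psi (pair2 w p1))^* * B p1 q1 * psi (pair2 q0 q1))).
apply: eq_bigr => q0 _; rewrite mulr_sumr; apply: eq_bigr => q1 _.
by rewrite tensor2_pair2 /id_op; ring.
Qed.

Lemma qform_tensor2_prod A B (f g : T -> C) :
  qform (tensor2 A B) (fun z => f (z ord0) * g (z o1)) = qform A f * qform B g.
Proof.
rewrite qform_pair2 /qform mulr_suml; apply: eq_bigr => p0 _.
rewrite mulr_suml exchange_big; apply: eq_bigr => q0 _.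
rewrite mulr_sumr; apply: eq_bigr => p1 _; rewrite mulr_sumr; apply: eq_bigr => q1 _.
by rewrite tensor2_pair2 !pair2_0 !pair2_1 rmorphM; ring.
Qed.

End TensorSquare.

Lemma mxrank_le2_sum_outer (F : fieldType) m n (M : 'M[F]_(m, n)) :
  (\rank M <= 2)%N ->
  exists (f0 : 'I_m -> F) (g0 : 'I_n -> F) (f1 : 'I_m -> F) (g1 : 'I_n -> F),
    forall i j, M i j = f0 i * g0 j + f1 i * g1 j.
Proof.
rewrite -{2}(mulmx_base M); move: (col_base M) (row_base M).
case: (\rank M) => [|[|[|r]]] // A B _.
- exists (fun=> 0), (fun=> 0), (fun=> 0), (fun=> 0) => i j.
  by rewrite mxE big_ord0 !mul0r addr0.
- exists (A^~ ord0), (B ord0), (fun=> 0), (fun=> 0) => i j.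
  by rewrite mxE big_ord1 mul0r addr0.
- exists (A^~ ord0), (B ord0), (A^~ (lift ord0 ord0)), (B (lift ord0 ord0)) => i j.
  by rewrite mxE big_ord_recl big_ord1.
Qed.

Section WernerStates.
Variables (C : numClosedFieldType) (d : nat).
Local Notation sigma := (@sigmaW C d).
Local Notation one := (@id_op C (idx d)).
Implicit Types (X Y U V : 'I_d -> 'I_d -> C).

Lemma tpow2E (s : op C (idx d)) : tpow 2 s =2 tensor2 s s.
Proof.
move=> x y; rewrite /tpow big_ord_recl big_ord1.
by have -> : lift ord0 ord0 = o1 :> 'I_2 by apply: val_inj.
Qed.

Lemma psi2E X Y U V z : psi2 X Y U V z =
  X (z ord0).1 (z o1).1 * U (z ord0).2 (z o1).2 +
  Y (z ord0).1 (z o1).1 * V (z ord0).2 (z o1).2.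
Proof. by rewrite /psi2; case: (z ord0); case: (z o1). Qed.

Lemma sigmaW_offdiag (k l : 'I_d) : k != l -> sigma (k, l) (k, l) = 1.
Proof. by move=> /negbTE ne_kl; rewrite /sigmaW /maxent_proj /id_op eqxx /= ne_kl !mulr0 subr0. Qed.

Lemma sigmaW_real x y : sigma x y \is Num.real.
Proof. by rewrite /sigmaW /maxent_proj /id_op rpredB ?rpredM ?rpredV ?rpred_nat. Qed.

Lemma sigmaW_sym x y : sigma x y = sigma y x.
Proof. by rewrite /sigmaW /maxent_proj /id_op eq_sym andbC. Qed.

Lemma Phi_real X Y U V : (Phi X Y U V)^* = Phi X Y U V.
Proof.
rewrite /Phi /qform rmorph_sum exchange_big; apply: eq_bigr => y _.
rewrite rmorph_sum; apply: eq_bigr => x _.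
rewrite !rmorphM /= conjCK !tpow2E /tensor2 rmorphM /=.
rewrite !(conj_Creal (sigmaW_real _ _)) (sigmaW_sym (y ord0)) (sigmaW_sym (y o1)).
by ring.
Qed.

Definition sigmaW_mix (a : C) : op C (idx d) :=
  fun x y => a * sigma x y + (1 - a) * one x y.

Lemma sigmaW_mix1 : sigmaW_mix 1 =2 sigma.
Proof. by move=> x y; rewrite /sigmaW_mix subrr mul0r addr0 mul1r. Qed.

Lemma ptrans_werner (t : C) : d%:R != 0 :> C ->
  ptrans (werner d t) =2 sigmaW_mix (2 * t).
Proof.
move=> d_neq0 [x1 x2] [y1 y2].
rewrite /sigmaW_mix /ptrans /werner /sigmaW /maxent_proj /flip /id_op /= !xpair_eqE.
rewrite (eq_sym y2 x2) (eq_sym x2 x1) [(y1 == y2) && _]andbC.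
move: (((x1 == y1) && (x2 == y2))%:R : C) (((x1 == x2) && (y1 == y2))%:R : C) => B E.
move: (d%:R : C) d_neq0 => D D_neq0.
have two_neq0 : 2 != 0 :> C by rewrite pnatr_eq0.
by field.
Qed.

Lemma schmidt_rank_psi2 X Y U V : (schmidt_rank (psi2 X Y U V) <= 2)%N.
Proof.
rewrite /schmidt_rank.
pose col (W : 'I_d -> 'I_d -> C) : 'cV_#|kA d 2| :=
  \col_i let a : kA d 2 := enum_val i in W (a ord0) (a o1).
have -> : coef_mx (psi2 X Y U V) = col X *m (col U)^T + col Y *m (col V)^T.
  by apply/matrixP => i j; rewrite !mxE !big_ord1 !mxE psi2E /join_idx !ffunE.
exact: leq_trans (mxrank_add _ _) (leq_add (mulmx_max_rank _ _) (mulmx_max_rank _ _)).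
Qed.

Lemma psi2_of_schmidt_rank_le2 (psi : kidx d 2 -> C) : (schmidt_rank psi <= 2)%N ->
  exists X Y U V, psi =1 psi2 X Y U V.
Proof.
move=> /mxrank_le2_sum_outer[f0 [g0 [f1 [g1 coefE]]]].
pose idxA (i a : 'I_d) : kA d 2 := pair2 i a.
exists (fun i a => f0 (enum_rank (idxA i a))), (fun i a => f1 (enum_rank (idxA i a))).
exists (fun j b => g0 (enum_rank (idxA j b))), (fun j b => g1 (enum_rank (idxA j b))).
move=> z; rewrite psi2E.
have zE : join_idx [ffun m => (z m).1] [ffun m => (z m).2] = z.
  by apply/ffunP => m; rewrite !ffunE; case: (z m).
have pair2_proj (h : idx d -> 'I_d) : pair2 (h (z ord0)) (h (z o1)) = [ffun m => h (z m)].
  by apply/ffunP => -[[|[|m]] lt_m2]; rewrite !ffunE //=; congr (h (z _)); exact: val_inj.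
have := coefE (enum_rank [ffun m => (z m).1]) (enum_rank [ffun m => (z m).2]).
by rewrite mxE !enum_rankK zE /idxA !pair2_proj.
Qed.

Section NonnegativePhi.
Hypothesis Phi_ge0 : forall X Y U V, 0 <= Phi X Y U V.

Lemma qform_sigmaW_rank2_ge0 (k l : 'I_d) (x y x' y' : 'I_d -> C) : k != l ->
  0 <= qform sigma (fun p : idx d => x p.1 * y p.2 + x' p.1 * y' p.2).
Proof.
move=> ne_kl; rewrite -[X in 0 <= X]mulr1 -(sigmaW_offdiag ne_kl) -qform_delta.
rewrite -qform_tensor2_prod.
rewrite (@eq_qform _ _ _ (tpow 2 sigma) _ (psi2 (fun i a => x i * (k == a)%:R)
  (fun i a => x' i * (k == a)%:R) (fun j b => y j * (l == b)%:R)
  (fun j b => y' j * (l == b)%:R))) ?Phi_ge0 // => [u v | z].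
  by rewrite tpow2E.
rewrite psi2E /=; case: (z o1) => a b /=; rewrite xpair_eqE.
by case: (k == a); case: (l == b); rewrite /= ?mulr0 ?mulr1 ?mul0r ?addr0; ring.
Qed.

Lemma qform_tensor2_mix_ge0 (a : C) X Y U V : (1 < d)%N -> 0 <= a <= 1 ->
  0 <= qform (tensor2 (sigmaW_mix a) (sigmaW_mix a)) (psi2 X Y U V).
Proof.
move=> lt1d /andP[a_ge0 a_le1].
have ne01 : Ordinal (ltnW lt1d) != Ordinal lt1d by [].
have slice_ge0 w : 0 <= qform sigma (fun p => psi2 X Y U V (pair2 p w)).
  rewrite (@eq_qform _ _ _ sigma _
    (fun p => X p.1 w.1 * U p.2 w.2 + Y p.1 w.1 * V p.2 w.2)) //.
    exact: (qform_sigmaW_rank2_ge0 (X^~ w.1) (U^~ w.2) (Y^~ w.1) (V^~ w.2) ne01).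
  by move=> p; rewrite psi2E pair2_0 pair2_1.
have slice'_ge0 w : 0 <= qform sigma (fun q => psi2 X Y U V (pair2 w q)).
  rewrite (@eq_qform _ _ _ sigma _
    (fun q => X w.1 q.1 * U w.2 q.2 + Y w.1 q.1 * V w.2 q.2)) //.
    exact: (qform_sigmaW_rank2_ge0 (X w.1) (U w.2) (Y w.1) (V w.2) ne01).
  by move=> q; rewrite psi2E pair2_0 pair2_1.
have b_ge0 : 0 <= 1 - a by rewrite subr_ge0.
rewrite (@eq_qform _ _ _ (fun x y => a ^+ 2 * tensor2 sigma sigma x y
   + (a * (1 - a) * tensor2 sigma one x y + (a * (1 - a) * tensor2 one sigma x y
   + (1 - a) ^+ 2 * tensor2 one one x y))) _ (psi2 X Y U V)) //; last first.
  by move=> x y; rewrite /tensor2 /sigmaW_mix; ring.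
rewrite !qformD !qformZ qform_tensor2_id qform_id_tensor2 qform_tensor2_id.
rewrite -(eq_qform (tpow2E sigma) (frefl _)) -/(Phi X Y U V).
by rewrite !addr_ge0 ?mulr_ge0 ?exprn_ge0 ?Phi_ge0 ?sumr_ge0 // => w _; apply: qform_id_ge0.
Qed.

End NonnegativePhi.

Lemma Phi_ge0_of_undistillable (X Y U V : 'I_d -> 'I_d -> C) : (0 < d)%N ->
  ~ distillable 2 (werner d (2^-1 : C)) -> 0 <= Phi X Y U V.
Proof.
move=> d_gt0 undistillable.
have /CrealP/real_ge0P[//|Phi_lt0] := Phi_real X Y U V.
case: undistillable; exists (psi2 X Y U V); split; first exact: schmidt_rank_psi2.
rewrite (@eq_qform _ _ _ (tpow 2 sigma) _ (psi2 X Y U V)) // => x y.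
have d_neq0 : d%:R != 0 :> C by rewrite pnatr_eq0 -lt0n.
by rewrite !tpow2E /tensor2 !ptrans_werner // mulfV ?pnatr_eq0 // !sigmaW_mix1.
Qed.

Lemma undistillable_of_Phi_ge0 (t : C) : (1 < d)%N -> 0 <= 2 * t <= 1 ->
  (forall X Y U V, 0 <= Phi X Y U V) -> ~ distillable 2 (werner d t).
Proof.
move=> lt1d t_range Phi_ge0 [psi [/psi2_of_schmidt_rank_le2[X [Y [U [V psiE]]]]]].
have d_neq0 : d%:R != 0 :> C by rewrite pnatr_eq0 -lt0n (ltnW lt1d).
have mixE : tpow 2 (ptrans (werner d t)) =2 tensor2 (sigmaW_mix (2 * t)) (sigmaW_mix (2 * t)).
  by move=> x y; rewrite tpow2E /tensor2 !ptrans_werner.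
by rewrite (eq_qform mixE psiE) le_gtF ?qform_tensor2_mix_ge0.
Qed.

End WernerStates.

Theorem proposition2p1 (R : realType) (d : nat) (hd : (3 <= d)%N) :
  (forall t : R, (d%:R)^-1 < t -> t <= 2%:R^-1 ->
      ~ distillable 2 (werner (C := R[i]) d (t%:C)%C))
  <->
  (forall x y u v : 'I_d -> 'I_d -> R[i], 0 <= Phi x y u v).
Proof.
have lt1d : (1 < d)%N by apply: leq_trans hd.
split=> [undistillable X Y U V | Phi_ge0 t lt_inv_d_t le_t_half].
  apply: Phi_ge0_of_undistillable (ltnW lt1d) _.
  have := undistillable 2^-1; rewrite rmorphV ?unitfE ?pnatr_eq0 // rmorph_nat.
  by apply; rewrite // ltf_pV2 ?posrE ?ltr0n ?ltr_nat // (ltnW lt1d).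
have t_gt0 : 0 < t by apply: lt_trans lt_inv_d_t; rewrite invr_gt0 ltr0n (ltnW lt1d).
apply: undistillable_of_Phi_ge0 lt1d _ Phi_ge0.
rewrite -(rmorph_nat (real_complex R) 2) -rmorphM /= ler0c -(rmorph1 (real_complex R)) lecR.
rewrite mulr_ge0 ?ler0n ?(ltW t_gt0) //=.
by rewrite -[X in _ <= X](@mulfV R 2) ?pnatr_eq0 // ler_pM2l ?ltr0n.
Qed.
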